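(* Let $\mathcal B$ be finite, $\eta>0$, $B_A>0$, and let $A,\tilde A\in\mathbb R^{\mathcal B}$ satisfy $\|A\|_\infty\le B_A$, $\|\tilde A\|_\infty\le B_A$ and be such that $\nu=\exp(\eta A)$ and $\tilde\nu=\exp(\eta\tilde A)$ are probability vectors on $\mathcal B$. Let ${\rm H}=\mathrm{diag}(\tilde\nu)-\tilde\nu\tilde\nu^\top$ and ${\rm L}=\mathrm{diag}(\nu)-\nu\nu^\top$. Then for every $g\in\mathbb R^{\mathcal B}$, $$e^{2\eta B_A}\,g^\top{\rm L}g\ \ge\ g^\top{\rm H}g\ \ge\ e^{-2\eta B_A}\,g^\top{\rm L}g.$$ *)

From HB Require Import structures.
From mathcomp Require Import all_boot all_order all_algebra.
From mathcomp Require Import reals.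
From mathcomp Require Import sequences exp.
Set Implicit Arguments. Unset Strict Implicit. Unset Printing Implicit Defensive.
Import Order.TTheory GRing.Theory Num.Theory.
Local Open Scope ring_scope.

Definition supnorm_le {R : realType} {B : finType} (A : B -> R) (c : R) : Prop :=
  forall b, `|A b| <= c.

Definition expvec {R : realType} {B : finType} (eta : R) (A : B -> R) : B -> R :=
  fun b => expR (eta * A b).

Definition prob_vec {R : realType} {B : finType} (nu : B -> R) : Prop :=
  (forall b, 0 <= nu b) /\ \sum_(b : B) nu b = 1.

Definition covmx {R : realType} {B : finType} (nu : B -> R) : B -> B -> R :=
  fun i j => (if i == j then nu i else 0) - nu i * nu j.

Definition qform {R : realType} {B : finType} (M : B -> B -> R) (g : B -> R) : R :=
  \sum_(i : B) \sum_(j : B) g i * M i j * g j.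

From HB Require Import structures.
From mathcomp Require Import all_boot all_order all_algebra.
From mathcomp Require Import reals.
From mathcomp Require Import sequences exp.
From mathcomp Require Import ring lra.
Set Implicit Arguments. Unset Strict Implicit. Unset Printing Implicit Defensive.
Import Order.TTheory GRing.Theory Num.Theory.
Local Open Scope ring_scope.

(* For weights [p] summing to 1, [qform (covmx p) g] is the variance of [g]
   under [p], i.e. the minimum over [c] of [\sum_i p i * (g i - c) ^+ 2],
   attained at the mean of [g].  If [p <= K * q] pointwise, comparing the
   [p]-deviation from the [q]-mean with the [q]-variance gives
   [Var_p g <= K * Var_q g].  Two vectors of the form [exp (eta * A)] with
   [|A| <= BA] are pointwise within a factor [exp (2 * eta * BA)] of each
   other, which gives both inequalities. *)

Section CovarianceForm.

Variables (R : realType) (B : finType).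
Implicit Types (p q g X Y : B -> R) (c K eta BA : R).

Lemma qform_covmx p g :
  qform (covmx p) g = \sum_i p i * g i ^+ 2 - (\sum_i p i * g i) ^+ 2.
Proof.
rewrite /qform /covmx expr2 mulr_suml -sumrB; apply: eq_bigr => i _.
have -> : \sum_j g i * ((if i == j then p i else 0) - p i * p j) * g j =
  \sum_j g i * (if i == j then p i else 0) * g j -
  \sum_j (g i * p i) * (p j * g j).
  by rewrite -sumrB; apply: eq_bigr => j _; ring.
rewrite -mulr_sumr (bigD1 i) //= eqxx big1 ?addr0; first ring.
by move=> j /negbTE ji; rewrite eq_sym ji mulr0 mul0r.
Qed.

Lemma sum_sqr_dev_covmx p g c :
  \sum_i p i = 1 ->
  \sum_i p i * (g i - c) ^+ 2 = qform (covmx p) g + (\sum_i p i * g i - c) ^+ 2.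
Proof.
move=> p1; rewrite qform_covmx.
have -> : \sum_i p i * (g i - c) ^+ 2 =
    \sum_i p i * g i ^+ 2 - 2 * c * \sum_i p i * g i + c ^+ 2 * \sum_i p i.
  by rewrite !mulr_sumr -sumrB -big_split /=; apply: eq_bigr => i _; ring.
by rewrite p1; ring.
Qed.

Lemma qform_covmx_le_sum_sqr_dev p g c :
  \sum_i p i = 1 -> qform (covmx p) g <= \sum_i p i * (g i - c) ^+ 2.
Proof. by move=> p1; rewrite sum_sqr_dev_covmx // lerDl sqr_ge0. Qed.

Lemma qform_covmx_mean p g :
  \sum_i p i = 1 ->
  qform (covmx p) g = \sum_i p i * (g i - \sum_j p j * g j) ^+ 2.
Proof. by move=> p1; rewrite sum_sqr_dev_covmx // subrr expr0n addr0. Qed.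

Lemma qform_covmx_le_scale p q g K :
  \sum_i p i = 1 -> \sum_i q i = 1 -> (forall b, p b <= K * q b) ->
  qform (covmx p) g <= K * qform (covmx q) g.
Proof.
move=> p1 q1 pKq; rewrite (qform_covmx_mean g q1) mulr_sumr.
apply: le_trans (qform_covmx_le_sum_sqr_dev g (\sum_j q j * g j) p1) _.
by apply: ler_sum => i _; rewrite mulrA ler_wpM2r ?sqr_ge0.
Qed.

Lemma expvec_le_expR_mul eta BA X Y :
  0 <= eta -> supnorm_le X BA -> supnorm_le Y BA ->
  forall b, expvec eta X b <= expR (2 * eta * BA) * expvec eta Y b.
Proof.
move=> eta_ge0 hX hY b; rewrite /expvec -expRD ler_expR.
have /andP[_ XleBA] : - BA <= X b <= BA by rewrite -ler_norml.
have /andP[YgeNBA _] : - BA <= Y b <= BA by rewrite -ler_norml.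
have := ler_wpM2l eta_ge0 XleBA; have := ler_wpM2l eta_ge0 YgeNBA; lra.
Qed.

End CovarianceForm.

Theorem mainTheorem9 (R : realType) (B : finType) (eta BA : R)
  (A At : B -> R) (heta : 0 < eta) (hBA : 0 < BA)
  (hA : supnorm_le A BA) (hAt : supnorm_le At BA)
  (hnu : prob_vec (expvec eta A)) (hnut : prob_vec (expvec eta At))
  (g : B -> R) :
  let L := covmx (expvec eta A) in
  let H := covmx (expvec eta At) in
  expR (2 * eta * BA) * qform L g >= qform H g /\
  qform H g >= expR (- (2 * eta * BA)) * qform L g.
Proof.
move=> L H; have eta_ge0 := ltW heta.
have [[_ nu1] [_ nut1]] := (hnu, hnut).
split.
  by apply: qform_covmx_le_scale => //; apply: expvec_le_expR_mul.
rewrite expRN ler_pdivrMl ?expR_gt0 //.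
by apply: qform_covmx_le_scale => //; apply: expvec_le_expR_mul.
Qed.
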